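(* Let $f\in C_{\mathbb{R}}[0,1]$ and $u\in(0,1]$ be such that $P_{f,u}\neq0$. Then $\limsup_{\rho\to+\infty}|\Phi_{f,u}(\rho)|=+\infty$. In particular, there is a sequence $\{\rho_k\}_{k\ge1}$ of positive numbers with $\rho_k\to+\infty$ such that $\{|\Phi_{f,u}(\rho_k)|\}_{k\ge1}$ is increasing and $|\Phi_{f,u}(\rho_k)|\to+\infty$.
   Context: $C_{\mathbb{R}}[0,1]$ denotes the real-valued continuous functions on $[0,1]$. For $f\in C[0,1]$ and $u\in(0,1]$, $\Phi_{f,u}(z)=\int_0^u f(s)e^{(u-s)z}\,ds$ ($z\in\mathbb{C}$), an entire function, and $P_{f,u}=\max\{|f(s)|:0\le s\le u\}$. *)

From Stdlib Require Import Reals.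
From Coquelicot Require Import Coquelicot.
Open Scope R_scope.

Definition cont_on_01 (f : R -> R) : Prop :=
  forall x, 0 <= x <= 1 ->
    filterlim f (within (fun y => 0 <= y <= 1) (locally x)) (locally (f x)).

Definition Phi (f : R -> R) (u rho : R) : R :=
  RInt (fun s => f s * exp ((u - s) * rho)) 0 u.

Definition P (f : R -> R) (u : R) : R :=
  real (Lub_Rbar (fun y => exists s, 0 <= s <= u /\ y = Rabs (f s))).

(* limsup_{x -> +oo} g x = +oo, i.e. inf_N sup_{x > N} g x = +oo,
   i.e. every tail supremum is +oo. *)
Definition limsup_pinfty_is_pinfty (g : R -> R) : Prop :=
  forall N : R, Lub_Rbar (fun y => exists x, N < x /\ y = g x) = p_infty.

From Stdlib Require Import Reals Lra Classical ClassicalEpsilon.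
From Coquelicot Require Import Coquelicot.
Open Scope R_scope.

(* Suppose |Phi_{f,u}| <= M on a half-line (N, +oo).  For 0 < a < u test f against the
   cutoff q(s) = (1 - e^(-rho s))^m with m = e^(rho a), which is O(1/(rho d)) on [0, a - d]
   and within O(1/(rho d)) of 1 on [a + d, u].  Writing 1 - e^(-rho s) = 1 - e^(-rho u) e^((u-s) rho)
   and expanding binomially, int_0^u f q = sum_i C(m,i) (-e^(-rho u))^i Phi(i rho), which differs
   from Phi(0) = int_0^u f by at most M ((1 + e^(-rho u))^m - 1) = O(M m e^(-rho u)) = O(1/rho).
   Hence |int_0^a f| <= 2 d sup|f| + O(1/rho); letting rho -> +oo, then d -> 0, all the
   primitives int_0^a f vanish, so f = 0 on [0, u] and P_{f,u} = 0.  Unboundedness of |Phi|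
   gives the limsup, and a recursive choice of points gives the increasing sequence. *)

Lemma exp_pow x n : exp x ^ n = exp (INR n * x).
Proof.
  induction n as [|n IH].
  - simpl. rewrite Rmult_0_l, exp_0. reflexivity.
  - rewrite S_INR, <- tech_pow_Rmult, IH, <- exp_plus. f_equal. ring.
Qed.

Lemma bernoulli_sub x m : 0 <= x <= 1 -> 1 - INR m * x <= (1 - x) ^ m.
Proof.
  intros Hx. induction m as [|m IH].
  - simpl. lra.
  - rewrite S_INR. simpl.
    assert (0 <= (1 - x) ^ m) by (apply pow_le; lra).
    assert (0 <= INR m) by apply pos_INR.
    nra.
Qed.

Lemma exp_neg_le_inv y : 0 < y -> exp (- y) <= / y.
Proof.
  intros Hy. rewrite exp_Ropp. apply Rinv_le_contravar; [lra|].
  pose proof (exp_ineq1_le y). lra.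
Qed.

Lemma one_add_pow_sub1_le z m : 0 <= z -> INR m * z <= 1 / 2 -> (1 + z) ^ m - 1 <= 2 * (INR m * z).
Proof.
  intros Hz Hmz.
  assert (Hpow : (1 + z) ^ m <= exp (INR m * z)).
  { rewrite <- exp_pow. apply pow_incr. pose proof (exp_ineq1_le z). lra. }
  set (w := INR m * z) in *.
  assert (Hw : 0 <= w) by (apply Rmult_le_pos; [apply pos_INR | exact Hz]).
  assert (Hinv : exp w * exp (- w) = 1) by (rewrite <- exp_plus, Rplus_opp_r, exp_0; reflexivity).
  pose proof (exp_ineq1_le (- w)). pose proof (exp_pos w).
  nra.
Qed.

Lemma binomial_C_ge0 m i : 0 <= Binomial.C m i.
Proof.
  unfold Binomial.C. apply Rle_mult_inv_pos; [apply pos_INR|].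
  apply Rmult_lt_0_compat; apply INR_fact_lt_0.
Qed.

(* Termwise comparison with the binomial expansion of [(1 + lam) ^ m]; the [i = 0] terms cancel. *)
Lemma binomial_alternating_sum_dev (F : nat -> R) (M lam : R) (m : nat) :
  (0 < m)%nat -> 0 <= lam -> (forall i, Rabs (F (S i)) <= M) ->
  Rabs (sum_f_R0 (fun i => Binomial.C m i * (- lam) ^ i * F i) m - F 0%nat)
    <= M * ((1 + lam) ^ m - 1).
Proof.
  intros Hm Hlam HF.
  rewrite (decomp_sum _ m), (Rplus_comm 1 lam), binomial, (decomp_sum _ m) by exact Hm.
  simpl (Binomial.C m 0 * _). rewrite C_n_0. simpl (_ ^ 0).
  match goal with
  | |- Rabs (_ + ?S - _) <= M * (_ + ?T - _) =>
      replace (_ + S - _) with S by ring; replace (_ + T - _) with T by (rewrite pow1; ring)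
  end.
  eapply Rle_trans; [apply sum_f_R0_triangle|].
  rewrite scal_sum. apply sum_Rle. intros i _.
  rewrite pow1, Rmult_1_r, !Rabs_mult, <- RPow_abs, Rabs_Ropp, (Rabs_right lam) by lra.
  rewrite (Rabs_right (Binomial.C _ _)) by apply Rle_ge, binomial_C_ge0.
  apply Rmult_le_compat_l; [|apply HF].
  apply Rmult_le_pos; [apply binomial_C_ge0 | apply pow_le; exact Hlam].
Qed.

Lemma ex_RInt_continuous_R (g : R -> R) a b : (forall x, continuous g x) -> ex_RInt g a b.
Proof. intros Hg. apply (@ex_RInt_continuous R_CompleteNormedModule). intros z _. apply Hg. Qed.

Lemma continuous_Rmult (f g : R -> R) x :
  continuous f x -> continuous g x -> continuous (fun y => f y * g y) x.
Proof. intros Hf Hg. apply (continuous_mult f g x); assumption. Qed.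

Lemma RInt_sum_f_R0 (g : nat -> R -> R) a b n : (forall i x, continuous (g i) x) ->
  RInt (fun s => sum_f_R0 (fun i => g i s) n) a b = sum_f_R0 (fun i => RInt (g i) a b) n.
Proof.
  intros Hg.
  assert (Hsum : forall k x, continuous (fun s => sum_f_R0 (fun i => g i s) k) x).
  { intros k x. induction k as [|k IHk]; [apply Hg|].
    apply (continuous_plus (fun s => sum_f_R0 (fun i => g i s) k) (g (S k))); [apply IHk | apply Hg]. }
  induction n as [|n IH]; [reflexivity|].
  simpl. rewrite <- IH.
  apply (RInt_plus (fun s => sum_f_R0 (fun i => g i s) n) (g (S n)));
    apply ex_RInt_continuous_R; auto.
Qed.

Lemma RInt_mul_one_sub (h g : R -> R) a b : (forall x, continuous h x) -> (forall x, continuous g x) ->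
  RInt (fun s => h s * (1 - g s)) a b = RInt h a b - RInt (fun s => h s * g s) a b.
Proof.
  intros Hh Hg.
  rewrite <- (RInt_minus (V := R_CompleteNormedModule))
    by (apply ex_RInt_continuous_R; intros; try apply continuous_Rmult; auto).
  apply RInt_ext. intros x _. unfold minus, plus, opp. simpl. ring.
Qed.

Lemma abs_RInt_le_split (g : R -> R) x y z c1 c2 : (forall t, continuous g t) -> x <= y <= z ->
  (forall t, x <= t <= y -> Rabs (g t) <= c1) -> (forall t, y <= t <= z -> Rabs (g t) <= c2) ->
  Rabs (RInt g x z) <= (y - x) * c1 + (z - y) * c2.
Proof.
  intros Hg Hxyz H1 H2.
  rewrite <- (RInt_Chasles g x y z) by apply ex_RInt_continuous_R, Hg.
  eapply Rle_trans; [apply Rabs_triang|].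
  apply Rplus_le_compat; apply abs_RInt_le_const; try apply ex_RInt_continuous_R; auto; lra.
Qed.

(* With [m = e^(rho a)], [cutoff rho m] is a smoothed indicator of [[a, +oo)]. *)
Definition cutoff (rho : R) (m : nat) (s : R) : R := (1 - exp (- (rho * s))) ^ m.

Lemma exp_neg_mul_le1 rho s : 0 <= rho -> 0 <= s -> exp (- (rho * s)) <= 1.
Proof.
  intros Hr Hs. rewrite exp_Ropp, <- Rinv_1. apply Rinv_le_contravar; [lra|].
  pose proof (Rmult_le_pos _ _ Hr Hs). pose proof (exp_ineq1_le (rho * s)). lra.
Qed.

Lemma cutoff_bounds rho m s : 0 <= rho -> 0 <= s -> 0 <= cutoff rho m s <= 1.
Proof.
  intros Hr Hs. pose proof (exp_neg_mul_le1 rho s Hr Hs). pose proof (exp_pos (- (rho * s))).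
  unfold cutoff. split; [apply pow_le; lra|].
  rewrite <- (pow1 m) at 2. apply pow_incr. lra.
Qed.

Lemma cutoff_le_before rho m a d s : 0 < rho -> 0 <= s -> 0 < d ->
  INR m = exp (rho * a) -> s <= a - d -> cutoff rho m s <= / (rho * d).
Proof.
  intros Hr Hs Hd Hm Hsa.
  assert (Hexp : cutoff rho m s <= exp (- exp (rho * (a - s)))).
  { replace (- exp (rho * (a - s))) with (INR m * - exp (- (rho * s)))
      by (rewrite Hm, <- Ropp_mult_distr_r, <- exp_plus; f_equal; f_equal; ring).
    rewrite <- exp_pow. apply pow_incr.
    pose proof (exp_neg_mul_le1 rho s (Rlt_le _ _ Hr) Hs).
    pose proof (exp_ineq1_le (- exp (- (rho * s)))). lra. }
  eapply Rle_trans; [apply Hexp|].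
  eapply Rle_trans; [apply exp_neg_le_inv, exp_pos|].
  apply Rinv_le_contravar; [nra|].
  pose proof (exp_ineq1_le (rho * (a - s))). nra.
Qed.

Lemma one_sub_cutoff_le_after rho m a d s : 0 < rho -> 0 <= s -> 0 < d ->
  INR m = exp (rho * a) -> a + d <= s -> 1 - cutoff rho m s <= / (rho * d).
Proof.
  intros Hr Hs Hd Hm Has.
  pose proof (exp_neg_mul_le1 rho s (Rlt_le _ _ Hr) Hs). pose proof (exp_pos (- (rho * s))).
  assert (Hb := bernoulli_sub (exp (- (rho * s))) m ltac:(lra)).
  replace (INR m * exp (- (rho * s))) with (exp (- (rho * (s - a)))) in Hb
    by (rewrite Hm, <- exp_plus; f_equal; ring).
  assert (Hinv : exp (- (rho * (s - a))) <= / (rho * (s - a))) by (apply exp_neg_le_inv; nra).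
  assert (/ (rho * (s - a)) <= / (rho * d)) by (apply Rinv_le_contravar; nra).
  unfold cutoff. lra.
Qed.

Lemma cutoff_binomial rho m u s :
  cutoff rho m s = sum_f_R0 (fun i => Binomial.C m i * (- exp (- (rho * u))) ^ i
                                        * exp ((u - s) * (INR i * rho))) m.
Proof.
  unfold cutoff.
  replace (1 - exp (- (rho * s))) with (- exp (- (rho * u)) * exp ((u - s) * rho) + 1)
    by (rewrite Ropp_mult_distr_l_reverse, <- exp_plus;
        replace (- (rho * u) + (u - s) * rho) with (- (rho * s)) by ring; ring).
  rewrite binomial. apply sum_eq. intros i _.
  rewrite pow1, Rpow_mult_distr, exp_pow.
  replace ((u - s) * (INR i * rho)) with (INR i * ((u - s) * rho)) by ring. ring.
Qed.

Lemma continuous_cutoff rho m x : continuous (cutoff rho m) x.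
Proof.
  apply (@ex_derive_continuous R_AbsRing R_NormedModule). unfold cutoff. auto_derive. exact I.
Qed.

Lemma exists_exp_mul_nat a T : 0 < a -> exists rho m, T < rho /\ INR m = exp (rho * a).
Proof.
  intros Ha. destruct (INR_unbounded (exp (a * T))) as [m Hm].
  assert (Hm0 : 0 < INR m) by (pose proof (exp_pos (a * T)); lra).
  exists (ln (INR m) / a), m. split.
  - apply (Rmult_lt_reg_l a); [exact Ha|].
    replace (a * (ln (INR m) / a)) with (ln (INR m)) by (field; lra).
    rewrite <- (ln_exp (a * T)). apply ln_increasing; [apply exp_pos | exact Hm].
  - replace (ln (INR m) / a * a) with (ln (INR m)) by (field; lra).
    rewrite exp_ln; [reflexivity | exact Hm0].
Qed.

Lemma le_of_le_add_div x y K : 0 <= K ->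
  (forall T, exists rho, T < rho /\ x <= y + K / rho) -> x <= y.
Proof.
  intros HK Hx. apply Rle_plus_epsilon. intros eps Heps.
  destruct (Hx (K / eps)) as [rho [HT Hle]].
  assert (HKe : 0 <= K / eps) by (apply Rle_mult_inv_pos; assumption).
  assert (K <= eps * rho).
  { apply (Rmult_lt_compat_l eps) in HT; [|exact Heps].
    replace (eps * (K / eps)) with K in HT by (field; lra). lra. }
  assert (K / rho <= eps).
  { apply (Rmult_le_reg_r rho); [lra|]. unfold Rdiv. rewrite Rmult_assoc, Rinv_l by lra. lra. }
  lra.
Qed.

Section Cutoff_tests.

Variables (h : R -> R) (u B : R).
Hypothesis h_cont : forall x, continuous h x.
Hypothesis h_bound : forall s, 0 <= s <= u -> Rabs (h s) <= B.

Lemma Phi_at_0 : Phi h u 0 = RInt h 0 u.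
Proof. unfold Phi. apply RInt_ext. intros x _. rewrite Rmult_0_r, exp_0. apply Rmult_1_r. Qed.

Lemma continuous_exp_affine r x : continuous (fun s => exp ((u - s) * r)) x.
Proof. apply (@ex_derive_continuous R_AbsRing R_NormedModule). auto_derive. exact I. Qed.

Lemma RInt_mul_cutoff rho m :
  RInt (fun s => h s * cutoff rho m s) 0 u
  = sum_f_R0 (fun i => Binomial.C m i * (- exp (- (rho * u))) ^ i * Phi h u (INR i * rho)) m.
Proof.
  rewrite (RInt_ext _ (fun s => sum_f_R0 (fun i => Binomial.C m i * (- exp (- (rho * u))) ^ i
                                  * (h s * exp ((u - s) * (INR i * rho)))) m)).
  2: { intros s _. rewrite (cutoff_binomial rho m u s), scal_sum. apply sum_eq. intros i _. ring. }
  rewrite RInt_sum_f_R0.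
  - apply sum_eq. intros i _. unfold Phi.
    apply (RInt_scal (V := R_CompleteNormedModule)).
    apply ex_RInt_continuous_R. intros x.
    apply continuous_Rmult; [apply h_cont | apply continuous_exp_affine].
  - intros i x. apply continuous_Rmult; [apply continuous_const|].
    apply continuous_Rmult; [apply h_cont | apply continuous_exp_affine].
Qed.

Lemma RInt_mul_cutoff_dev rho m M : 0 < rho -> (0 < m)%nat ->
  (forall r, rho <= r -> Rabs (Phi h u r) <= M) -> INR m * exp (- (rho * u)) <= 1 / 2 ->
  Rabs (RInt (fun s => h s * cutoff rho m s) 0 u - RInt h 0 u)
    <= 2 * M * (INR m * exp (- (rho * u))).
Proof.
  intros Hr Hm HM Hml.
  assert (HM0 : 0 <= M) by (eapply Rle_trans; [apply Rabs_pos | apply (HM rho); lra]).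
  assert (Hl : 0 <= exp (- (rho * u))) by (apply Rlt_le, exp_pos).
  rewrite RInt_mul_cutoff, <- Phi_at_0.
  replace (Phi h u 0) with (Phi h u (INR 0 * rho)) by (f_equal; simpl; ring).
  eapply Rle_trans.
  - apply (binomial_alternating_sum_dev (fun i => Phi h u (INR i * rho))); [exact Hm | exact Hl|].
    intros i. apply HM. rewrite S_INR. pose proof (pos_INR i). nra.
  - rewrite (Rmult_comm 2 M), Rmult_assoc. apply Rmult_le_compat_l; [exact HM0|].
    apply one_add_pow_sub1_le; assumption.
Qed.

Lemma RInt_mul_one_sub_cutoff_approx rho m a d : 0 < rho -> 0 < d -> d <= a -> a + d <= u ->
  INR m = exp (rho * a) ->
  Rabs (RInt h 0 a - RInt (fun s => h s * (1 - cutoff rho m s)) 0 u)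
    <= 2 * d * B + u * B / (rho * d).
Proof.
  intros Hr Hd Hda Hadu Hm.
  assert (HB : 0 <= B) by (eapply Rle_trans; [apply Rabs_pos | apply (h_bound 0); lra]).
  set (c := / (rho * d)).
  assert (Hc : 0 <= c) by (apply Rlt_le, Rinv_0_lt_compat; nra).
  set (q := cutoff rho m).
  assert (Hq : forall s, 0 <= s -> 0 <= q s <= 1) by (intros; apply cutoff_bounds; lra).
  assert (Hhq : forall x, continuous (fun s => h s * q s) x)
    by (intros; apply continuous_Rmult; [apply h_cont | apply continuous_cutoff]).
  assert (Hhq' : forall x, continuous (fun s => h s * (1 - q s)) x).
  { intros x. apply continuous_Rmult; [apply h_cont|].
    apply (continuous_minus (fun _ => 1) q); [apply continuous_const | apply continuous_cutoff]. }
  assert (Hhead : RInt h 0 a - RInt (fun s => h s * (1 - q s)) 0 a = RInt (fun s => h s * q s) 0 a)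
    by (rewrite RInt_mul_one_sub by (apply h_cont || apply continuous_cutoff); ring).
  assert (Hsplit : RInt (fun s => h s * (1 - q s)) 0 a + RInt (fun s => h s * (1 - q s)) a u
                   = RInt (fun s => h s * (1 - q s)) 0 u)
    by (apply (RInt_Chasles (V := R_CompleteNormedModule)); apply ex_RInt_continuous_R; auto).
  assert (Hbefore : Rabs (RInt (fun s => h s * q s) 0 a) <= (a - d - 0) * (B * c) + (a - (a - d)) * (B * 1)).
  { apply abs_RInt_le_split; [exact Hhq | lra | |]; intros t Ht;
      rewrite Rabs_mult, (Rabs_pos_eq (q t)) by (apply Hq; lra);
      apply Rmult_le_compat; try apply Rabs_pos; try apply Hq; try apply h_bound; try lra.
    apply cutoff_le_before with a; lra. }
  assert (Hafter : Rabs (RInt (fun s => h s * (1 - q s)) a u) <= (a + d - a) * (B * 1) + (u - (a + d)) * (B * c)).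
  { apply abs_RInt_le_split; [exact Hhq' | lra | |]; intros t Ht;
      assert (Hqt := Hq t ltac:(lra));
      rewrite Rabs_mult, (Rabs_pos_eq (1 - q t)) by lra;
      apply Rmult_le_compat; try apply Rabs_pos; try apply h_bound; try lra.
    apply one_sub_cutoff_le_after with a; lra. }
  replace (u * B / (rho * d)) with (u * (B * c)) by (unfold c, Rdiv; ring).
  rewrite <- Hsplit.
  replace (RInt h 0 a - _) with (RInt (fun s => h s * q s) 0 a - RInt (fun s => h s * (1 - q s)) a u)
    by lra.
  eapply Rle_trans; [apply Rabs_triang|]. rewrite Rabs_Ropp.
  assert (0 <= B * c) by (apply Rmult_le_pos; assumption).
  nra.
Qed.

Lemma Rabs_RInt_le_of_Phi_bounded a d N M : 0 < d -> d <= a -> a + d <= u -> 0 <= M ->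
  (forall r, N < r -> Rabs (Phi h u r) <= M) -> Rabs (RInt h 0 a) <= 2 * d * B.
Proof.
  intros Hd0 Hda Hdu HM0 HM.
  assert (HB : 0 <= B) by (eapply Rle_trans; [apply Rabs_pos | apply (h_bound 0); lra]).
  assert (Hua : 0 < 2 / (u - a)) by (apply Rdiv_lt_0_compat; lra).
  apply (le_of_le_add_div _ _ (u * B / d + 2 * M / (u - a))).
  { apply Rplus_le_le_0_compat; apply Rle_mult_inv_pos; nra. }
  intros T.
  destruct (exists_exp_mul_nat a (Rabs T + Rabs N + 2 / (u - a))) as [rho [m [Hrho Hm]]]; [lra|].
  pose proof (Rle_abs T). pose proof (Rle_abs N). pose proof (Rabs_pos T). pose proof (Rabs_pos N).
  assert (Hr : 0 < rho) by lra.
  exists rho. split; [lra|].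
  assert (Hm0 : (0 < m)%nat) by (apply INR_lt; rewrite Hm; apply exp_pos).
  assert (Hrua : 2 <= rho * (u - a)).
  { assert (Hrho2 : 2 / (u - a) < rho) by lra.
    apply (Rmult_lt_compat_r (u - a)) in Hrho2; [|lra].
    replace (2 / (u - a) * (u - a)) with 2 in Hrho2 by (field; lra). lra. }
  assert (Hml : INR m * exp (- (rho * u)) <= / (rho * (u - a))).
  { replace (INR m * exp (- (rho * u))) with (exp (- (rho * (u - a))))
      by (rewrite Hm, <- exp_plus; f_equal; ring).
    apply exp_neg_le_inv. lra. }
  assert (Hml2 : INR m * exp (- (rho * u)) <= 1 / 2).
  { eapply Rle_trans; [exact Hml|]. unfold Rdiv. rewrite Rmult_1_l. apply Rinv_le_contravar; lra. }
  assert (Hdev := RInt_mul_cutoff_dev rho m M Hr Hm0 ltac:(intros r Hr'; apply HM; lra) Hml2).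
  assert (Happ := RInt_mul_one_sub_cutoff_approx rho m a d Hr Hd0 Hda Hdu Hm).
  rewrite RInt_mul_one_sub in Happ by (apply h_cont || apply continuous_cutoff).
  assert (Hsum : 2 * M * (INR m * exp (- (rho * u))) <= 2 * M / (u - a) / rho).
  { replace (2 * M / (u - a) / rho) with (2 * M * / (rho * (u - a))) by (field; lra).
    apply Rmult_le_compat_l; lra. }
  replace ((u * B / d + 2 * M / (u - a)) / rho) with (u * B / (rho * d) + 2 * M / (u - a) / rho)
    by (field; lra).
  rewrite Rabs_minus_sym in Hdev.
  set (J := RInt h 0 u - RInt (fun s => h s * cutoff rho m s) 0 u) in *.
  pose proof (Rabs_triang (RInt h 0 a - J) J) as Htri.
  replace (RInt h 0 a - J + J) with (RInt h 0 a) in Htri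
    by (unfold Rminus; rewrite Rplus_assoc, Rplus_opp_l, Rplus_0_r; reflexivity).
  lra.
Qed.

Lemma RInt_eq0_of_Phi_bounded a N M : 0 < a < u -> 0 <= M ->
  (forall r, N < r -> Rabs (Phi h u r) <= M) -> RInt h 0 a = 0.
Proof.
  intros Ha HM0 HM.
  assert (HB : 0 <= B) by (eapply Rle_trans; [apply Rabs_pos | apply (h_bound 0); lra]).
  apply Rabs_eq_0, Rle_antisym; [|apply Rabs_pos].
  apply (le_of_le_add_div _ 0 (2 * B)); [lra|].
  intros T. exists (Rabs T + / a + / (u - a)).
  pose proof (Rle_abs T). pose proof (Rabs_pos T).
  assert (Hia : 0 < / a) by (apply Rinv_0_lt_compat; lra).
  assert (Hiua : 0 < / (u - a)) by (apply Rinv_0_lt_compat; lra).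
  set (rho := Rabs T + / a + / (u - a)).
  assert (Hr : 0 < rho) by (unfold rho; lra).
  split; [unfold rho; lra|].
  assert (Hra : / rho <= a).
  { rewrite <- (Rinv_inv a). apply Rinv_le_contravar; [exact Hia | unfold rho; lra]. }
  assert (Hrua : / rho <= u - a).
  { rewrite <- (Rinv_inv (u - a)). apply Rinv_le_contravar; [exact Hiua | unfold rho; lra]. }
  replace (0 + 2 * B / rho) with (2 * / rho * B) by (field; lra).
  apply (Rabs_RInt_le_of_Phi_bounded a (/ rho) N M); [apply Rinv_0_lt_compat | | | |]; auto; lra.
Qed.

End Cutoff_tests.

Lemma continuous_eq0_of_RInt_eq0 (h : R -> R) u : (forall x, continuous h x) ->
  (forall a, 0 < a < u -> RInt h 0 a = 0) -> forall s, 0 < s < u -> h s = 0.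
Proof.
  intros Hh Hz s Hs.
  assert (Hd : is_derive (fun x => RInt h 0 x) s (h s)).
  { apply (is_derive_RInt h (fun x => RInt h 0 x) 0 s); [|apply Hh].
    apply filter_forall. intros b. apply (RInt_correct (V := R_CompleteNormedModule)), ex_RInt_continuous_R, Hh. }
  assert (Hd0 : is_derive (fun x => RInt h 0 x) s 0).
  { apply (is_derive_ext_loc (fun _ => 0)); [|apply (@is_derive_const R_AbsRing R_NormedModule)].
    assert (Hr : 0 < Rmin s (u - s)) by (apply Rmin_glb_lt; lra).
    exists (mkposreal _ Hr). intros t Ht. change (Rabs (t - s) < Rmin s (u - s)) in Ht.
    pose proof (Rmin_l s (u - s)). pose proof (Rmin_r s (u - s)).
    apply Rabs_def2 in Ht. symmetry. apply Hz. lra. }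
  apply is_derive_unique in Hd, Hd0. rewrite <- Hd. exact Hd0.
Qed.

Lemma continuous_eq0_on_closure (h : R -> R) u s : continuous h s -> 0 < u -> 0 <= s <= u ->
  (forall t, 0 < t < u -> h t = 0) -> h s = 0.
Proof.
  intros Hh Hu Hs Hz.
  destruct (Req_dec (h s) 0) as [|Hne]; [assumption|exfalso].
  destruct (proj1 (filterlim_locally h (h s)) Hh (mkposreal _ (Rabs_pos_lt _ Hne))) as [del Hdel].
  set (eps := Rmin del (u / 2) / 2).
  assert (Heps : 0 < eps /\ eps < del /\ eps <= u / 4).
  { pose proof (cond_pos del). pose proof (Rmin_l del (u / 2)). pose proof (Rmin_r del (u / 2)).
    assert (0 < Rmin del (u / 2)) by (apply Rmin_glb_lt; lra). unfold eps. lra. }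
  set (t := if Rle_dec s (u / 2) then s + eps else s - eps).
  assert (Ht : 0 < t < u /\ Rabs (t - s) < del).
  { unfold t. destruct Rle_dec.
    - replace (s + eps - s) with eps by ring. rewrite Rabs_right; lra.
    - replace (s - eps - s) with (- eps) by ring. rewrite Rabs_Ropp, Rabs_right; lra. }
  specialize (Hdel t (proj2 Ht)). change (Rabs (h t - h s) < Rabs (h s)) in Hdel.
  rewrite (Hz t (proj1 Ht)), Rminus_0_l, Rabs_Ropp in Hdel. lra.
Qed.

Lemma continuous_bounded_on (h : R -> R) a b : a <= b -> (forall x, continuous h x) ->
  exists B, forall s, a <= s <= b -> Rabs (h s) <= B.
Proof.
  intros Hab Hh.
  destruct (continuity_ab_maj (fun x => Rabs (h x)) a b Hab) as [Mx [HMx _]].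
  { intros c _. apply continuity_pt_filterlim, (continuous_Rabs_comp h), Hh. }
  exists (Rabs (h Mx)). exact HMx.
Qed.

Definition clamp (u x : R) : R := Rmax 0 (Rmin u x).

Lemma clamp_id u x : 0 <= x <= u -> clamp u x = x.
Proof. intros Hx. unfold clamp. rewrite Rmin_right, Rmax_right; lra. Qed.

Lemma clamp_range u x : 0 <= u -> 0 <= clamp u x <= u.
Proof. intros Hu. unfold clamp, Rmax, Rmin. repeat destruct Rle_dec; lra. Qed.

Lemma clamp_lipschitz u x y : 0 <= u -> Rabs (clamp u x - clamp u y) <= Rabs (x - y).
Proof.
  intros Hu. unfold clamp, Rmax, Rmin.
  repeat destruct Rle_dec; unfold Rabs; repeat destruct Rcase_abs; lra.
Qed.

Lemma continuous_comp_clamp f u x : cont_on_01 f -> 0 <= u <= 1 ->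
  continuous (fun y => f (clamp u y)) x.
Proof.
  intros Hf Hu.
  assert (Hrange : 0 <= clamp u x <= 1) by (pose proof (clamp_range u x); lra).
  apply (filterlim_comp _ _ _ (clamp u) f _ (within (fun y => 0 <= y <= 1) (locally (clamp u x)))).
  - intros Q [eps HQ]. exists eps. intros y Hy. apply HQ.
    + change (Rabs (clamp u y - clamp u x) < eps).
      eapply Rle_lt_trans; [apply clamp_lipschitz; lra | exact Hy].
    + pose proof (clamp_range u y). lra.
  - apply Hf, Hrange.
Qed.

Lemma Phi_ext f g u r : 0 <= u -> (forall s, 0 <= s <= u -> f s = g s) -> Phi f u r = Phi g u r.
Proof.
  intros Hu Hfg. unfold Phi. apply RInt_ext. intros x Hx.
  rewrite Rmin_left, Rmax_right in Hx by lra. rewrite Hfg by lra. reflexivity.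
Qed.

Lemma P_eq0 f u : 0 <= u -> (forall s, 0 <= s <= u -> f s = 0) -> P f u = 0.
Proof.
  intros Hu Hz. unfold P.
  rewrite (Lub_Rbar_eqset _ (fun y => y = 0)).
  - rewrite (is_lub_Rbar_unique _ 0); [reflexivity|].
    split; [intros y ->; apply Rle_refl | intros b Hb; apply Hb; reflexivity].
  - intros y. split.
    + intros [s [Hs ->]]. rewrite Hz by exact Hs. apply Rabs_R0.
    + intros ->. exists 0. split; [lra|]. rewrite Hz by lra. symmetry. apply Rabs_R0.
Qed.

Definition unbounded_at_pinfty (g : R -> R) : Prop := forall t, exists x, t < x /\ t < g x.

Lemma limsup_pinfty_of_unbounded g : unbounded_at_pinfty g -> limsup_pinfty_is_pinfty g.
Proof.
  intros Hg N.
  destruct (Lub_Rbar_correct (fun y => exists x, N < x /\ y = g x)) as [Hub _].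
  revert Hub. destruct Lub_Rbar as [r| |]; intros Hub; [exfalso | reflexivity | exfalso].
  - destruct (Hg (Rmax N r)) as [x [Hx Hgx]].
    assert (Hle : Rbar_le (g x) r) by (apply Hub; exists x; split; [pose proof (Rmax_l N r); lra | reflexivity]).
    pose proof (Rmax_r N r). simpl in Hle. lra.
  - destruct (Hg N) as [x [Hx _]].
    apply (Hub (g x)). exists x. split; [exact Hx | reflexivity].
Qed.

Fixpoint runaway_seq (g sel : R -> R) (k : nat) : R :=
  match k with
  | O => sel 0
  | S k' => sel (Rmax (g (runaway_seq g sel k')) (INR k))
  end.

Lemma increasing_seq_of_unbounded g : unbounded_at_pinfty g ->
  exists x_ : nat -> R,
    (forall k, 0 < x_ k) /\ is_lim_seq x_ p_infty /\
    (forall k, g (x_ k) < g (x_ (S k))) /\ is_lim_seq (fun k => g (x_ k)) p_infty.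
Proof.
  intros Hg.
  set (sel t := proj1_sig (constructive_indefinite_description _ (Hg t))).
  assert (Hsel : forall t, t < sel t /\ t < g (sel t))
    by (intros t; exact (proj2_sig (constructive_indefinite_description _ (Hg t)))).
  set (x_ := runaway_seq g sel).
  assert (Hk : forall k, INR k < x_ k /\ INR k < g (x_ k)).
  { intros [|k]; unfold x_; cbn [runaway_seq].
    - apply Hsel.
    - destruct (Hsel (Rmax (g (runaway_seq g sel k)) (INR (S k)))).
      pose proof (Rmax_r (g (runaway_seq g sel k)) (INR (S k))). lra. }
  exists x_. split; [|split; [|split]].
  - intros k. pose proof (pos_INR k). pose proof (Hk k). lra.
  - apply is_lim_seq_le_p_loc with INR; [|apply is_lim_seq_INR].
    exists O. intros k _. apply Rlt_le, Hk.
  - intros k. unfold x_. cbn [runaway_seq].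
    destruct (Hsel (Rmax (g (runaway_seq g sel k)) (INR (S k)))).
    pose proof (Rmax_l (g (runaway_seq g sel k)) (INR (S k))). lra.
  - apply is_lim_seq_le_p_loc with INR; [|apply is_lim_seq_INR].
    exists O. intros k _. apply Rlt_le, Hk.
Qed.

Lemma Phi_unbounded f u : cont_on_01 f -> 0 < u <= 1 -> P f u <> 0 ->
  unbounded_at_pinfty (fun r => Rabs (Phi f u r)).
Proof.
  intros Hf Hu HP t. apply NNPP. intros Hno. apply HP, P_eq0; [lra|].
  (* [Phi f u] only sees [f] on [[0, u]], where it agrees with this continuous extension. *)
  set (h y := f (clamp u y)).
  assert (Hh : forall x, continuous h x) by (intros; apply continuous_comp_clamp; [exact Hf | lra]).
  assert (Hhf : forall s, 0 <= s <= u -> h s = f s) by (intros; unfold h; rewrite clamp_id; auto).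
  destruct (continuous_bounded_on h 0 u) as [B HB]; [lra | exact Hh |].
  assert (Hbd : forall r, t < r -> Rabs (Phi h u r) <= Rabs t).
  { intros r Hr. rewrite (Phi_ext h f) by (lra || auto).
    apply Rnot_lt_le. intros Hlt. apply Hno. exists r. pose proof (Rle_abs t). split; lra. }
  assert (Hint : forall a, 0 < a < u -> RInt h 0 a = 0)
    by (intros a Ha; apply (RInt_eq0_of_Phi_bounded h u B Hh HB a t (Rabs t)); auto using Rabs_pos).
  intros s Hs. rewrite <- Hhf by exact Hs.
  apply (continuous_eq0_on_closure h u); [apply Hh | lra | exact Hs |].
  apply continuous_eq0_of_RInt_eq0; assumption.
Qed.

Theorem lemma4p4 (f : R -> R) (u : R) :
  cont_on_01 f -> 0 < u <= 1 -> P f u <> 0 ->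
  limsup_pinfty_is_pinfty (fun rho => Rabs (Phi f u rho)) /\
  exists rho_ : nat -> R,
    (forall k, 0 < rho_ k) /\
    is_lim_seq rho_ p_infty /\
    (forall k, Rabs (Phi f u (rho_ k)) < Rabs (Phi f u (rho_ (S k)))) /\
    is_lim_seq (fun k => Rabs (Phi f u (rho_ k))) p_infty.
Proof.
  intros Hf Hu HP.
  pose proof (Phi_unbounded f u Hf Hu HP) as Hunb.
  split.
  - exact (limsup_pinfty_of_unbounded _ Hunb).
  - exact (increasing_seq_of_unbounded _ Hunb).
Qed.
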